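(* Let $\varphi \in \mathcal{L}$. If there is a quasi-notional graded doxastic model (QNGDM) $M$ and a world $w$ of $M$ with $(M,w) \models \varphi$, then there exists a finite QNGDM $M'$ and a world $w'$ of $M'$ with $(M',w') \models \varphi$.
   Context: Fix a countably infinite set of atoms $\mathit{Atm}$ and a finite set of agents $\mathit{Agt}=\{1,\dots,n\}$; a group is a non-empty subset $J\subseteq \mathit{Agt}$, and $2^{\mathit{Agt}*}$ denotes the set of groups. $\mathbb{N}_0$ (resp. $\mathbb{N}_1$) are the naturals with (resp. without) $0$, and $\mathbb{N}_0^{\omega}=\mathbb{N}_0\cup\{\omega\}$, $\mathbb{N}_1^{\omega}=\mathbb{N}_1\cup\{\omega\}$ with $\omega$ an infinite element. A multiset over a set $X$ is a function $f:X\to\mathbb{N}_0^{\omega}$; its support is $\{x: f(x)>0\}$. A possibly infinite sum of grades equals the sum of its non-zero summands if there are finitely many of them and none is $\omega$, and equals $\omega$ otherwise. For $k\in\mathbb{N}_0$ and a group $J$, a partition of $k$ over $J$ is a function $\delta:J\to\mathbb{N}_0$ with $\sum_{i\in J}\delta(i)=k$; the set of these is $P(J,k)$. The language $\mathcal{L}_0$ is given by $\alpha ::= p \mid \neg\alpha \mid \alpha\wedge\alpha \mid \triangle_i^{k}\alpha$ with $p\in\mathit{Atm}$, $i\in\mathit{Agt}$, $k\in\mathbb{N}_1^{\omega}$ (''agent $i$ explicitly believes $\alpha$ with degree at least $k$''). The language $\mathcal{L}$ is given by $\varphi ::= \alpha \mid \neg\varphi\mid\varphi\wedge\varphi\mid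 \Box_J^{k}\varphi$ with $\alpha\in\mathcal{L}_0$, $J$ a group, $k\in\mathbb{N}_0$. A QNGDM is a tuple $M=(W,\mathcal{D},\rho,\mathcal{V})$ with $W$ a set of worlds, $\mathcal{D}:\mathit{Agt}\times W\to$ (multisets over $\mathcal{L}_0$), $\rho: 2^{\mathit{Agt}*}\times W\times W\to\mathbb{N}_0^{\omega}$, $\mathcal{V}:\mathit{Atm}\to 2^W$, with satisfaction: $(M,w)\models p$ iff $w\in\mathcal{V}(p)$; Boolean clauses as usual; $(M,w)\models\triangle_i^k\alpha$ iff $\mathcal{D}(i,w)(\alpha)\ge k$; $(M,w)\models\Box_J^k\varphi$ iff for all $u\in W$ with $\rho(J,w,u)\le k$, $(M,u)\models\varphi$; and such that for every group $J$ and $w,u\in W$ with $\rho(J,w,u)\neq\omega$: (i) $\rho(J,w,u)\ge \sum_{\alpha\in\mathcal{L}_0,\,(M,u)\not\models\alpha}\sum_{i\in J}\mathcal{D}(i,w)(\alpha)$; and (ii) there exists $\delta\in P(J,\rho(J,w,u))$ such that for every non-empty $J'\subset J$, $\sum_{i\in J'}\delta(i)\ge\rho(J',w,u)$. A QNGDM is finite if $W$ is finite and the support of $\mathcal{D}(i,w)$ is finite for every $i,w$. *)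

From mathcomp Require Import all_boot.
From Stdlib Require Import ClassicalEpsilon.
From Stdlib Require List.

Set Implicit Arguments.
Unset Strict Implicit.
Unset Printing Implicit Defensive.

Inductive ext := Fin of nat | Omega.

Definition ext_le (a b : ext) : Prop :=
  match a, b with
  | Fin x, Fin y => (x <= y)%N
  | _, Omega => True
  | Omega, Fin _ => False
  end.

Definition ext_pos (a : ext) : bool :=
  match a with Fin x => (0 < x)%N | Omega => true end.

Definition ext_val (a : ext) : nat := match a with Fin x => x | Omega => 0 end.

(** A (possibly infinite) sum of grades: it is the (finite) sum of the
    non-zero summands if these are finitely many and none is omega, and
    omega otherwise.  [xsum_witness f s m] says that [s] is a duplicate-free
    list containing every index with non-zero summand, no summand is omega,
    and [m] is the sum over [s]. *)
Definition xsum_witness (T : Type) (f : T -> ext) (m : nat) : Prop :=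
  exists s : seq T,
    List.NoDup s /\ (forall x, f x <> Fin 0 -> List.In x s) /\
    (forall x, f x <> Omega) /\ m = sumn (map (fun x => ext_val (f x)) s).

Definition xsum (T : Type) (f : T -> ext) : ext :=
  match excluded_middle_informative (exists m, xsum_witness f m) with
  | left H => Fin (proj1_sig (constructive_indefinite_description _ H))
  | right _ => Omega
  end.

Definition group (n : nat) := {J : {set 'I_n} | J != set0}.

Inductive form0 (n : nat) : Type :=
  | Atom0 : nat -> form0 n
  | Neg0 : form0 n -> form0 n
  | And0 : form0 n -> form0 n -> form0 n
  | Tri : 'I_n -> {k : ext | ext_pos k} -> form0 n -> form0 n.

Inductive form (n : nat) : Type :=
  | Base : form0 n -> form n
  | Neg : form n -> form n
  | And : form n -> form n -> form n
  | Box : group n -> nat -> form n -> form n.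

(** Underlying structure (W, D, rho, V) of a QNGDM; rho is given on all
    subsets but only its values on groups are ever used. *)
Record premodel (n : nat) := Premodel {
  W : Type;
  D : 'I_n -> W -> form0 n -> ext;
  rho : {set 'I_n} -> W -> W -> ext;
  V : nat -> W -> Prop
}.
Arguments W {n} p.
Arguments D {n} p _ _ _.
Arguments rho {n} p _ _ _.
Arguments V {n} p _ _.

Fixpoint sat0 (n : nat) (M : premodel n) (w : W M) (a : form0 n) : Prop :=
  match a with
  | Atom0 p => V M p w
  | Neg0 b => ~ @sat0 n M w b
  | And0 b c => @sat0 n M w b /\ @sat0 n M w c
  | Tri i k b => ext_le (proj1_sig k) (D M i w b)
  end.
Arguments sat0 {n} M w a.

Fixpoint sat (n : nat) (M : premodel n) (w : W M) (f : form n) : Prop :=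
  match f with
  | Base a => sat0 M w a
  | Neg g => ~ @sat n M w g
  | And g h => @sat n M w g /\ @sat n M w h
  | Box J k g => forall u : W M, ext_le (rho M (proj1_sig J) w u) (Fin k) -> @sat n M u g
  end.
Arguments sat {n} M w f.

Definition unsat_mass (n : nat) (M : premodel n) (J : {set 'I_n}) (w u : W M) : ext :=
  xsum (fun a : form0 n =>
    if excluded_middle_informative (sat0 M u a) then Fin 0
    else xsum (fun i : 'I_n => if i \in J then D M i w a else Fin 0)).
Arguments unsat_mass {n} M J w u.

Definition is_QNGDM (n : nat) (M : premodel n) : Prop :=
  forall (J : {set 'I_n}) (w u : W M), J != set0 ->
    forall r : nat, rho M J w u = Fin r ->
      ext_le (unsat_mass M J w u) (Fin r) /\
      exists delta : 'I_n -> nat,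
        (\sum_(i in J) delta i)%N = r /\
        forall J' : {set 'I_n}, J' != set0 -> J' \proper J ->
          ext_le (rho M J' w u) (Fin (\sum_(i in J') delta i)%N).
Arguments is_QNGDM {n} M.

Definition finite_premodel (n : nat) (M : premodel n) : Prop :=
  (exists s : seq (W M), forall w, List.In w s) /\
  (forall (i : 'I_n) (w : W M), exists s : seq (form0 n),
      forall a, D M i w a <> Fin 0 -> List.In a s).
Arguments finite_premodel {n} M.

(* Prune a model of phi to layers 0, ..., md(phi): layer 0 is the root w, and
   layer i+1 contains, for each world u of layer i and each subformula
   Box_J^k psi of phi, a world v with rho(J,u,v) <= k refuting psi whenever
   there is one.  Grades are kept between consecutive layers and set to omega
   elsewhere, and D is restricted to the L0-subformulas of phi.  A formula of
   modal depth d keeps its truth value at the worlds of layers up to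
   md(phi) - d.  Condition (ii) survives since every grade is copied or omega,
   which constrains nothing; condition (i) survives since restricting D only
   removes summands from the unsatisfied mass. *)

From mathcomp Require Import all_boot zify.
From Stdlib Require Import Classical ClassicalEpsilon.
From Stdlib Require List Permutation.

Set Implicit Arguments.
Unset Strict Implicit.
Unset Printing Implicit Defensive.

Lemma ext_le_trans a b c : ext_le a b -> ext_le b c -> ext_le a c.
Proof. by case: a; case: b; case: c => //= x y z; apply: leq_trans. Qed.

Lemma mem_In (T : eqType) (x : T) (s : seq T) : x \in s -> List.In x s.
Proof. by elim: s => [|y s IH] //=; rewrite in_cons => /orP [/eqP ->|/IH]; auto. Qed.

Section GradeSums.
Variable T : Type.
Implicit Types (f : T -> ext) (h : T -> nat) (s : seq T).

Lemma sumn_Permutation (s t : seq nat) : Permutation.Permutation s t -> sumn s = sumn t.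
Proof. by elim=> //= *; lia. Qed.

Lemma sumn_map_filter_neq0 h s : sumn (map h [seq x <- s | h x != 0]) = sumn (map h s).
Proof. by elim: s => //= x s IH; case: eqP => [->|_] /=; rewrite IH. Qed.

Lemma xsum_witness_unique f m m' : xsum_witness f m -> xsum_witness f m' -> m = m'.
Proof.
move=> [s [Ns [Cs [Fs ->]]]] [s' [Ns' [Cs' [_ ->]]]].
set h := fun x => ext_val (f x).
have supp x : h x != 0 -> f x <> Fin 0 by rewrite /h; case: (f x) => [[|k]|].
have in_supp x s0 : (forall x, f x <> Fin 0 -> List.In x s0) ->
    List.In x [seq y <- s0 | h y != 0] <-> h x != 0.
  move=> C0; split; first by move/List.filter_In => [].
  by move=> hx; apply/List.filter_In; split; [apply/C0/supp|].
(* Without their zero summands, both lists enumerate the support exactly once. *)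
rewrite -(sumn_map_filter_neq0 h s) -(sumn_map_filter_neq0 h s').
apply/sumn_Permutation/Permutation.Permutation_map.
apply: Permutation.NoDup_Permutation; try exact: List.NoDup_filter.
by move=> x; rewrite in_supp // in_supp.
Qed.

Lemma xsumE f m : xsum_witness f m -> xsum f = Fin m.
Proof.
move=> Hm; rewrite /xsum.
case: excluded_middle_informative => [H|[]]; last by exists m.
case: (constructive_indefinite_description _ H) => m' /= Hm'.
by rewrite (xsum_witness_unique Hm' Hm).
Qed.

Lemma xsum0 f : (forall x, f x = Fin 0) -> xsum f = Fin 0.
Proof.
move=> f0; apply: xsumE; exists [::]; split; first constructor.
by split=> [x|]; [rewrite f0|split=> // x; rewrite f0].
Qed.

Lemma xsum_Fin_witness f m : xsum f = Fin m -> xsum_witness f m.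
Proof.
rewrite /xsum; case: excluded_middle_informative => // H.
by case: (constructive_indefinite_description _ H) => m' Hm' [<-].
Qed.

Lemma xsum_le_restrict f f' : (forall x, f' x = f x \/ f' x = Fin 0) ->
  ext_le (xsum f') (xsum f).
Proof.
move=> ff'; case E: (xsum f) => [m|]; last by case: (xsum f').
have [s [Ns [Cs [Fs ->]]]] := xsum_Fin_witness E.
rewrite (@xsumE _ (sumn (map (fun x => ext_val (f' x)) s))) /=.
  by elim: s {Ns Cs E} => //= x s IH; apply: leq_add => //; case: (ff' x) => ->.
exists s; split=> //; split=> [x|]; first by case: (ff' x) => -> // /Cs.
by split=> // x; case: (ff' x) => ->.
Qed.

End GradeSums.

Section Subformulas.
Variable n : nat.

Fixpoint subforms0 (a : form0 n) : seq (form0 n) :=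
  a :: match a with
       | Atom0 _ => [::]
       | Neg0 b | Tri _ _ b => subforms0 b
       | And0 b c => subforms0 b ++ subforms0 c
       end.

Fixpoint subforms (f : form n) : seq (form n) :=
  f :: match f with
       | Base _ => [::]
       | Neg g | Box _ _ g => subforms g
       | And g h => subforms g ++ subforms h
       end.

Fixpoint base_subforms (f : form n) : seq (form0 n) :=
  match f with
  | Base a => subforms0 a
  | Neg g | Box _ _ g => base_subforms g
  | And g h => base_subforms g ++ base_subforms h
  end.

Fixpoint mdepth (f : form n) : nat :=
  match f with
  | Base _ => 0
  | Neg g => mdepth g
  | And g h => maxn (mdepth g) (mdepth h)
  | Box _ _ g => (mdepth g).+1
  end.

Lemma subforms0_self (a : form0 n) : List.In a (subforms0 a).
Proof. by case: a => *; left. Qed.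

Lemma subforms0_closed (a b : form0 n) :
  List.In b (subforms0 a) -> List.incl (subforms0 b) (subforms0 a).
Proof.
elim: a => [p|a IH|a IHa c IHc|i k a IH] /= [<-|Hb] //; try exact: List.incl_refl.
- by apply/List.incl_tl/IH.
- case/List.in_app_iff: Hb => Hb; apply/List.incl_tl.
    exact/List.incl_appl/IHa.
  exact/List.incl_appr/IHc.
- by apply/List.incl_tl/IH.
Qed.

Lemma base_subforms_closed (f : form n) (a : form0 n) :
  List.In a (base_subforms f) -> List.incl (subforms0 a) (base_subforms f).
Proof.
elim: f => [b|g IH|g IHg h IHh|J k g IH] //=; first exact: subforms0_closed.
by case/List.in_app_iff => Ha; [apply/List.incl_appl/IHg | apply/List.incl_appr/IHh].
Qed.

End Subformulas.

Section Unravel.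
Variables (n : nat) (M : premodel n) (w : W M) (phi : form n).

Definition box_counterexample u (J : group n) k g (v : W M) : Prop :=
  ext_le (rho M (sval J) u v) (Fin k) /\ ~ sat M v g.

Definition witness (u : W M) (f : form n) : W M :=
  if f is Box J k g then epsilon (inhabits u) (box_counterexample u J k g) else u.

Lemma sat_box_witness u J k g :
  (ext_le (rho M (sval J) u (witness u (Box J k g))) (Fin k) ->
     sat M (witness u (Box J k g)) g) ->
  sat M u (Box J k g).
Proof.
move=> Hw v Hv; apply: NNPP => Hg.
have [Hr Hn] := epsilon_spec (inhabits u) (box_counterexample u J k g)
  (ex_intro _ v (conj Hv Hg)).
exact: Hn (Hw Hr).
Qed.

Fixpoint layer (i : nat) : seq (W M) :=
  if i is i'.+1 then
    List.flat_map (fun u => List.map (witness u) (subforms phi)) (layer i')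
  else [:: w].

Lemma witness_in_layer i u f : List.In u (layer i) -> List.In f (subforms phi) ->
  List.In (witness u f) (layer i.+1).
Proof.
by move=> Hu Hf; apply/List.in_flat_map; exists u; split; last apply: List.in_map.
Qed.

Definition unravel_world := {i : 'I_(mdepth phi).+1 & 'I_(length (layer i))}.

Definition world_of (x : unravel_world) : W M := List.nth (tagged x) (layer (tag x)) w.

Lemma world_of_in_layer x : List.In (world_of x) (layer (tag x)).
Proof. by apply: List.nth_In; apply/ltP. Qed.

Lemma layer_world_of (i : 'I_(mdepth phi).+1) v : List.In v (layer i) ->
  exists2 y : unravel_world, tag y = i & world_of y = v.
Proof.
case/(List.In_nth _ _ w) => j [/ltP Hj <-].
by exists (Tagged (fun i : 'I_(mdepth phi).+1 => 'I_(length (layer i))) (Ordinal Hj)).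
Qed.

Definition unravel : premodel n :=
  @Premodel n unravel_world
    (fun i x a => if excluded_middle_informative (List.In a (base_subforms phi))
                  then D M i (world_of x) a else Fin 0)
    (fun J x y => if tag y == (tag x).+1 :> nat
                  then rho M J (world_of x) (world_of y) else Omega)
    (fun p x => V M p (world_of x)).

Definition unravel_root : unravel_world :=
  @Tagged _ ord0 (fun i : 'I_(mdepth phi).+1 => 'I_(length (layer i))) ord0.

Lemma sat0_unravel (x : unravel_world) a :
  List.incl (subforms0 a) (base_subforms phi) ->
  sat0 unravel x a <-> sat0 M (world_of x) a.
Proof.
elim: a => [p|a IH|a IHa c IHc|i k a IH] //= Hsub;
  have {}Hsub := proj2 (List.incl_cons_inv Hsub).
- by rewrite IH.
- by have [/IHa -> /IHc ->] := List.incl_app_inv _ _ Hsub.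
- case: excluded_middle_informative => // [[]].
  exact/Hsub/subforms0_self.
Qed.

Lemma sat_unravel g (x : unravel_world) :
  List.incl (subforms g) (subforms phi) ->
  List.incl (base_subforms g) (base_subforms phi) ->
  mdepth g + tag x <= mdepth phi ->
  sat unravel x g <-> sat M (world_of x) g.
Proof.
elim: g x => [a|g IH|g IHg h IHh|J k g IH] x /= Hsub Hbase Hdepth;
  have {Hsub} [Hg Hsub] := List.incl_cons_inv Hsub.
- exact: sat0_unravel.
- by rewrite IH.
- have [Hsg Hsh] := List.incl_app_inv _ _ Hsub.
  have [Hbg Hbh] := List.incl_app_inv _ _ Hbase.
  by rewrite IHg ?IHh //; lia.
- have Hnext : (tag x).+1 < (mdepth phi).+1 by lia.
  split=> [H|H y]; last first.
    case: eqP => // Hy /H; rewrite IH //; lia.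
  apply: sat_box_witness => Hr.
  have [y Hy Ey] := layer_world_of (i := Ordinal Hnext)
    (witness_in_layer (world_of_in_layer x) Hg).
  rewrite -Ey -IH //; last by rewrite Hy /=; lia.
  by apply: H; rewrite Hy /= eqxx Ey.
Qed.

Lemma unsat_mass_unravel J x y :
  ext_le (unsat_mass unravel J x y) (unsat_mass M J (world_of x) (world_of y)).
Proof.
apply: xsum_le_restrict => a /=.
case: (excluded_middle_informative (List.In a (base_subforms phi))) => /= Ha.
- left; have Hsat := sat0_unravel y (base_subforms_closed Ha).
  case: (excluded_middle_informative (sat0 unravel y a));
    case: (excluded_middle_informative (sat0 M (world_of y) a)) => //=; tauto.
- right; case: (excluded_middle_informative (sat0 unravel y a)) => //= _.
  by apply: xsum0 => i; case: ifP.
Qed.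

Lemma unravel_QNGDM : is_QNGDM M -> is_QNGDM unravel.
Proof.
move=> HM J x y HJ r /=; case: eqP => // Hxy Hr.
have [Hmass [delta [Hdelta Hsub]]] := HM J _ _ HJ r Hr.
split; first exact: ext_le_trans (unsat_mass_unravel J x y) Hmass.
by exists delta; split=> // J' HJ' HJJ'; rewrite /= Hxy eqxx; apply: Hsub.
Qed.

Lemma unravel_finite : finite_premodel unravel.
Proof.
split; first by exists (enum {: unravel_world}) => x; apply/mem_In; rewrite mem_enum.
by move=> i x; exists (base_subforms phi) => a /=; case: excluded_middle_informative.
Qed.

End Unravel.

Theorem lemma1 (n : nat) (phi : form n) :
  (exists (M : premodel n) (w : W M), is_QNGDM M /\ sat M w phi) ->
  exists (M' : premodel n) (w' : W M'),
    is_QNGDM M' /\ finite_premodel M' /\ sat M' w' phi.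
Proof.
move=> [M [w [HM Hphi]]].
exists (unravel w phi), (unravel_root w phi).
split; first exact: unravel_QNGDM.
split; first exact: unravel_finite.
by apply/sat_unravel; rewrite ?addn0 //; apply: List.incl_refl.
Qed.
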